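(* Let $F$ be a field, $V$ a nonzero vector space over $F$, $\Gamma$ a nonempty set, $\varphi:\Gamma\to\Gamma$ a map and $\mathfrak{w}\in F^\Gamma$, and let $\sigma_{\varphi,\mathfrak{w}}:V^\Gamma\to V^\Gamma$, $(x_\alpha)_{\alpha\in\Gamma}\mapsto(\mathfrak{w}_\alpha x_{\varphi(\alpha)})_{\alpha\in\Gamma}$. If $\downarrow\mathfrak{Z}=\Gamma$, then ${\rm Eigen}(\sigma_{\varphi,\mathfrak{w}},V^\Gamma)\subseteq\{0\}$; moreover in this case ${\rm Eigen}(\sigma_{\varphi,\mathfrak{w}},V^\Gamma)=\varnothing$ if $\varphi(\Gamma\setminus\mathfrak{Z})=\Gamma$, and ${\rm Eigen}(\sigma_{\varphi,\mathfrak{w}},V^\Gamma)=\{0\}$ otherwise.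
   Context: For a linear map $T:W\to W$ on an $F$-vector space $W$, ${\rm Eigen}(T,W)$ is the set of all $r\in F$ such that $T(x)=rx$ for some nonzero $x\in W$. $\mathfrak{Z}:=\{\alpha\in\Gamma:\mathfrak{w}_\alpha=0\}$ and $\downarrow\mathfrak{Z}:=\bigcup_{n\geq0}\varphi^{-n}(\mathfrak{Z})$. *)

From mathcomp Require Import all_boot all_order all_algebra.
Set Implicit Arguments. Unset Strict Implicit. Unset Printing Implicit Defensive.
Import GRing.Theory.
Local Open Scope ring_scope.

Definition wshift (F : fieldType) (V : lmodType F) (Gamma : Type)
  (phi : Gamma -> Gamma) (w : Gamma -> F) (x : Gamma -> V) : Gamma -> V :=
  fun a => w a *: x (phi a).

Definition Eigen (F : fieldType) (V : lmodType F) (Gamma : Type)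
  (T : (Gamma -> V) -> (Gamma -> V)) : F -> Prop :=
  fun r => exists x : Gamma -> V, x <> (fun _ => 0) /\ T x = (fun a => r *: x a).

Definition Zset (F : fieldType) (Gamma : Type) (w : Gamma -> F) : Gamma -> Prop :=
  fun a => w a = 0.

Definition downZ (F : fieldType) (Gamma : Type) (phi : Gamma -> Gamma)
  (w : Gamma -> F) : Gamma -> Prop :=
  fun a => exists n : nat, Zset w (iter n phi a).

(** For an eigenvector [x] with eigenvalue [r != 0] the equation
    [w a *: x (phi a) = r *: x a] shows that [x a = 0] as soon as [w a = 0]
    or [x (phi a) = 0]; by induction [x] vanishes on [downZ phi w], so when
    that set is everything only [r = 0] can occur.  Eigenvectors for [0] are
    the nonzero [x] with [w a *: x (phi a) = 0] for all [a]: if every [b] is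
    [phi a] with [w a != 0] this forces [x = 0], and if some [b] is not, a
    vector supported at [b] is such an eigenvector. *)

From mathcomp Require Import all_boot all_order all_algebra.
From Stdlib Require Import Classical ClassicalEpsilon FunctionalExtensionality.
Set Implicit Arguments. Unset Strict Implicit. Unset Printing Implicit Defensive.
Import GRing.Theory.
Local Open Scope ring_scope.

Section WeightedShift.

Variables (F : fieldType) (V : lmodType F) (Gamma : Type).
Variables (phi : Gamma -> Gamma) (w : Gamma -> F).

Lemma wshift_eigen_vanish (r : F) (x : Gamma -> V) (a : Gamma) :
  r != 0 -> wshift phi w x = (fun b => r *: x b) ->
  w a *: x (phi a) = 0 -> x a = 0.
Proof.
move=> r_neq0 eigen_x shift_a0; have := congr1 (fun f => f a) eigen_x.
rewrite /wshift /= shift_a0 => /esym/eqP.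
by rewrite scaler_eq0 (negbTE r_neq0) => /eqP.
Qed.

Lemma wshift_eigen_vanish_downZ (r : F) (x : Gamma -> V) (a : Gamma) :
  r != 0 -> wshift phi w x = (fun b => r *: x b) -> downZ phi w a -> x a = 0.
Proof.
move=> r_neq0 eigen_x [n]; elim: n a => [|n IHn] a /= Z_a.
  by apply: (wshift_eigen_vanish r_neq0 eigen_x); rewrite Z_a scale0r.
apply: (wshift_eigen_vanish r_neq0 eigen_x).
by rewrite (IHn (phi a)) ?scaler0 // -iterSr.
Qed.

Lemma Eigen_wshift_eq0 (r : F) :
  (forall a, downZ phi w a) -> Eigen (wshift (V:=V) phi w) r -> r = 0.
Proof.
move=> downZ_all [x [x_neq0 eigen_x]]; apply/eqP/negP => /negP r_neq0.
apply/x_neq0/functional_extensionality => a.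
exact: wshift_eigen_vanish_downZ r_neq0 eigen_x (downZ_all a).
Qed.

Lemma not_Eigen_wshift0 :
  (forall b, exists a, ~ Zset w a /\ phi a = b) ->
  ~ Eigen (wshift (V:=V) phi w) 0.
Proof.
move=> onto [x [x_neq0 eigen_x]]; apply/x_neq0/functional_extensionality => b.
have [a [w_a_neq0 <-]] := onto b.
have /eqP := congr1 (fun f => f a) eigen_x.
rewrite /wshift /= scale0r scaler_eq0 => /orP [/eqP w_a0 | /eqP //].
by case: w_a_neq0.
Qed.

Lemma Eigen_wshift0_notin_image (b : Gamma) :
  (exists v : V, v != 0) -> (forall a, phi a = b -> w a = 0) ->
  Eigen (wshift (V:=V) phi w) 0.
Proof.
move=> [v v_neq0] Z_preim_b.
pose x c : V := if excluded_middle_informative (c = b) then v else 0.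
exists x; split.
  move=> /(congr1 (fun f => f b)); rewrite /x /=.
  by case: excluded_middle_informative => // _ /eqP; rewrite (negbTE v_neq0).
apply: functional_extensionality => a; rewrite /wshift scale0r /x.
case: excluded_middle_informative => [/Z_preim_b w_a0 | _] /=.
  by rewrite w_a0 scale0r.
by rewrite scaler0.
Qed.

End WeightedShift.

Theorem lemma2p2 (F : fieldType) (V : lmodType F) (Gamma : Type)
  (phi : Gamma -> Gamma) (w : Gamma -> F)
  (hV : exists v : V, v != 0) (hGamma : inhabited Gamma) :
  (forall a : Gamma, downZ phi w a) ->
  (forall r : F, Eigen (wshift (V:=V) phi w) r -> r = 0) /\
  ((forall b : Gamma, exists a : Gamma, ~ Zset w a /\ phi a = b) ->
     forall r : F, ~ Eigen (wshift (V:=V) phi w) r) /\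
  (~ (forall b : Gamma, exists a : Gamma, ~ Zset w a /\ phi a = b) ->
     forall r : F, Eigen (wshift (V:=V) phi w) r <-> r = 0).
Proof.
move=> downZ_all; have eigen_eq0 := Eigen_wshift_eq0 (V:=V) downZ_all.
split; first exact: eigen_eq0.
split.
  move=> onto r eigen_r; move: (eigen_r); rewrite (eigen_eq0 r eigen_r).
  exact: not_Eigen_wshift0.
move=> not_onto r; split; first exact: eigen_eq0.
move=> ->; have [b b_notin_image] := not_all_ex_not _ _ not_onto.
apply: (Eigen_wshift0_notin_image hV (b := b)) => a phi_a_b.
by apply: NNPP => w_a_neq0; apply: b_notin_image; exists a.
Qed.
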